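(* Let $k\ge 2$ be an integer and let $E=(C,V)$ be a $k$-Party election such that both $|C|$ and $|V|$ are divisible by $k$. Then $\mathrm{pcc\text{-}agr}(E)=0$ and $\mathrm{pcc^+\text{-}agr}(E)=1/k$.
   Context: An (approval) election is a pair $E=(C,V)$ with candidate set $C$ and a collection of voters $V$; each vote is a binary vector indicating which candidates the voter approves. A $k$-Party election (with $|C|,|V|$ divisible by $k$) is one where $C$ is partitioned into $k$ disjoint groups $C_1,\dots,C_k$ of equal size and $V$ into $k$ disjoint groups $V_1,\dots,V_k$ of equal size, and for each $i\in[k]$ every voter in $V_i$ approves exactly the candidates in $C_i$. Pearson correlation of $x,y\in\mathbb{R}^t$: $\mathrm{pcc}(x,y)=\frac{\sum_i(x[i]-\overline{x})(y[i]-\overline{y})}{\sqrt{\sum_i(x[i]-\overline{x})^2}\sqrt{\sum_i(y[i]-\overline{y})^2}}$ (set to $1$ if $x$ or $y$ is constant). $\mathrm{pcc\text{-}agr}(E)=\frac{1}{|V|^2}\sum_{u\in V}\sum_{v\in V}\mathrm{pcc}(u,v)$ and $\mathrm{pcc^+\text{-}agr}(E)=\frac{1}{|V|^2}\sum_{u\in V}\sum_{v\in V}\max(0,\mathrm{pcc}(u,v))$, summing over all ordered pairs including $u=v$. *)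

From HB Require Import structures.
From mathcomp Require Import all_boot all_order all_algebra.
Set Implicit Arguments. Unset Strict Implicit. Unset Printing Implicit Defensive.
Import Order.TTheory GRing.Theory Num.Theory.
Local Open Scope ring_scope.

(* An approval election with candidate set 'I_m and voters indexed by 'I_n:
   E v c = true iff voter v approves candidate c. *)
Definition election (m n : nat) := 'I_n -> 'I_m -> bool.

Definition vote_vec (R : rcfType) (m n : nat) (E : election m n) (v : 'I_n)
  : 'I_m -> R := fun c => (E v c)%:R.

Definition mean (R : rcfType) (t : nat) (x : 'I_t -> R) : R :=
  (\sum_(i < t) x i) / t%:R.

Definition is_constant (R : rcfType) (t : nat) (x : 'I_t -> R) : bool :=
  [forall i, forall j, x i == x j].

(* Pearson correlation coefficient, set to 1 if x or y is constant. *)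
Definition pcc (R : rcfType) (t : nat) (x y : 'I_t -> R) : R :=
  if is_constant x || is_constant y then 1
  else (\sum_(i < t) (x i - mean x) * (y i - mean y)) /
       (Num.sqrt (\sum_(i < t) (x i - mean x) ^+ 2) *
        Num.sqrt (\sum_(i < t) (y i - mean y) ^+ 2)).

(* pcc-agr: average over all ordered pairs (u, v), including u = v. *)
Definition pcc_agr (R : rcfType) (m n : nat) (E : election m n) : R :=
  (\sum_(u < n) \sum_(v < n) pcc (vote_vec R E u) (vote_vec R E v)) / (n ^ 2)%:R.

Definition pccp_agr (R : rcfType) (m n : nat) (E : election m n) : R :=
  (\sum_(u < n) \sum_(v < n) Num.max 0 (pcc (vote_vec R E u) (vote_vec R E v)))
    / (n ^ 2)%:R.

(* k-Party election: candidates partitioned into k groups of equal size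
   (group map gc), voters partitioned into k groups of equal size (gv), and
   each voter of group i approves exactly the candidates of group i. *)
Definition k_party (k m n : nat) (E : election m n) : Prop :=
  exists (gc : 'I_m -> 'I_k) (gv : 'I_n -> 'I_k),
    [/\ forall i j : 'I_k, #|[set c | gc c == i]| = #|[set c | gc c == j]|,
        forall i j : 'I_k, #|[set v | gv v == i]| = #|[set v | gv v == j]|
      & forall v c, E v c = (gc c == gv v)].

From HB Require Import structures.
From mathcomp Require Import all_boot all_order all_algebra.
From mathcomp Require Import zify ring.
Set Implicit Arguments.
Unset Strict Implicit.
Unset Printing Implicit Defensive.
Import Order.TTheory GRing.Theory Num.Theory.
Local Open Scope ring_scope.

(* In a k-Party election every vote is the indicator vector of one of k
   candidate blocks of equal size s, so it has mean 1/k and centred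
   cross-products [i == j] s - s/k.  Hence two votes have correlation 1 when
   they come from the same party and -1/(k-1) otherwise.  Each voter agrees
   with the n/k voters of its own party and disagrees with the other
   n - n/k, so the correlations of a row sum to n/k - (n - n/k)/(k-1) = 0,
   while their positive parts sum to n/k, giving the averages 0 and 1/k. *)

Definition cov (R : rcfType) (t : nat) (x y : 'I_t -> R) : R :=
  \sum_(i < t) (x i - mean x) * (y i - mean y).

Definition block_vec (R : rcfType) (m k : nat) (g : 'I_m -> 'I_k) (i : 'I_k)
  : 'I_m -> R := fun c => (g c == i)%:R.

Lemma eq_mean (R : rcfType) (t : nat) (x x' : 'I_t -> R) :
  x =1 x' -> mean x = mean x'.
Proof. by move=> eq_x; rewrite /mean (eq_bigr _ (fun i _ => eq_x i)). Qed.

Lemma eq_pcc (R : rcfType) (t : nat) (x x' y y' : 'I_t -> R) :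
  x =1 x' -> y =1 y' -> pcc x y = pcc x' y'.
Proof.
move=> eq_x eq_y.
have eq_cst (z z' : 'I_t -> R) : z =1 z' -> is_constant z = is_constant z'.
  by move=> eq_z; apply: eq_forallb => i; apply: eq_forallb => j; rewrite !eq_z.
rewrite /pcc (eq_cst _ _ eq_x) (eq_cst _ _ eq_y) (eq_mean eq_x) (eq_mean eq_y).
congr (if _ then _ else _ / (Num.sqrt _ * Num.sqrt _));
  by apply: eq_bigr => i _; rewrite ?eq_x ?eq_y.
Qed.

Lemma pcc_nonconstant (R : rcfType) (t : nat) (x y : 'I_t -> R) :
  ~~ is_constant x -> ~~ is_constant y ->
  pcc x y = cov x y / (Num.sqrt (cov x x) * Num.sqrt (cov y y)).
Proof. by move=> /negbTE ncx /negbTE ncy; rewrite /pcc ncx ncy. Qed.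

Lemma sum_mean (R : rcfType) (t : nat) (x : 'I_t -> R) :
  \sum_(i < t) x i = t%:R * mean x.
Proof.
case: t x => [|t] x; first by rewrite big_ord0 mul0r.
by rewrite /mean mulrC divfK // pnatr_eq0.
Qed.

Lemma covE (R : rcfType) (t : nat) (x y : 'I_t -> R) :
  cov x y = \sum_(i < t) x i * y i - t%:R * mean x * mean y.
Proof.
have -> : cov x y = \sum_(i < t) x i * y i - mean y * \sum_(i < t) x i
                    - mean x * \sum_(i < t) y i + \sum_(i < t) mean x * mean y.
  rewrite !mulr_sumr -!sumrB -big_split /=.
  by apply: eq_bigr => i _; ring.
rewrite sumr_const card_ord !sum_mean -mulr_natl; ring.
Qed.

Section Equipartition.
Variables (T : finType) (k s : nat) (g : T -> 'I_k).
Hypothesis block_size : forall i, #|[set x | g x == i]| = s.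

Lemma card_equipartition : #|T| = (k * s)%N.
Proof.
rewrite -sum1_card (partition_big g predT) //=.
rewrite -[k in (k * _)%N]card_ord -sum_nat_const; apply: eq_bigr => i _.
by rewrite -(block_size i) -sum1dep_card.
Qed.

Lemma equipartition_block_gt0 : (0 < #|T|)%N -> (0 < s)%N.
Proof. by rewrite card_equipartition muln_gt0 => /andP[]. Qed.

Lemma sum_block_indicator (R : rcfType) i :
  \sum_x ((g x == i)%:R : R) = s%:R.
Proof.
rewrite -(block_size i) -sum1dep_card natr_sum [RHS]big_mkcond /=.
by apply: eq_bigr => x _; case: (g x == i).
Qed.

Lemma sum_block_if (R : rcfType) i (a b : R) :
  \sum_x (if g x == i then a else b) = s%:R * (a + (k%:R - 1) * b).
Proof.
have if_indicator x : (if g x == i then a else b) = b + (a - b) * (g x == i)%:R.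
  by case: (g x == i); rewrite ?mulr1 ?mulr0 ?addr0 // addrC subrK.
rewrite (eq_bigr _ (fun x _ => if_indicator x)) big_split /= -mulr_sumr.
rewrite sum_block_indicator sumr_const (card_equipartition : #|xpredT| = _).
rewrite -[b *+ _]mulr_natl natrM; ring.
Qed.

End Equipartition.

Section BlockVectors.
Variables (R : rcfType) (m k s : nat) (g : 'I_m -> 'I_k).
Hypotheses (k_gt1 : (1 < k)%N) (s_gt0 : (0 < s)%N).
Hypothesis block_size : forall i, #|[set c | g c == i]| = s.

Let m_eq : m = (k * s)%N.
Proof. by rewrite -(card_equipartition block_size) card_ord. Qed.

Let k_neq0 : (k%:R : R) != 0.
Proof. by rewrite pnatr_eq0 -lt0n ltnW. Qed.

Let s_neq0 : (s%:R : R) != 0.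
Proof. by rewrite pnatr_eq0 -lt0n. Qed.

Let k1_neq0 : (k%:R - 1 : R) != 0.
Proof. by rewrite subr_eq0 pnatr_eq1 neq_ltn k_gt1 orbT. Qed.

Lemma mean_block_vec i : mean (block_vec R g i) = k%:R^-1.
Proof.
rewrite /mean (sum_block_indicator block_size) m_eq natrM.
by field; apply/andP.
Qed.

Lemma block_vec_nonconstant i : ~~ is_constant (block_vec R g i).
Proof.
have /card_gt0P[c] : (0 < #|[set c | g c == i]|)%N by rewrite block_size.
have /card_gt0P[c'] : (0 < #|~: [set c | g c == i]|)%N.
  have := cardsC [set c | g c == i].
  by rewrite block_size card_ord; move: m_eq; nia.
rewrite !inE => /negbTE gc'i /eqP gci.
apply/forallP => /(_ c) /forallP /(_ c') /eqP.
by rewrite /block_vec gci gc'i eqxx; apply/eqP; rewrite oner_eq0.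
Qed.

Lemma cov_block_vec i j :
  cov (block_vec R g i) (block_vec R g j) = s%:R * ((i == j)%:R - k%:R^-1).
Proof.
have prod_block c :
    block_vec R g i c * block_vec R g j c = (i == j)%:R * (g c == i)%:R.
  rewrite /block_vec; case: eqP => [->|]; last by rewrite !mul0r mulr0.
  by rewrite mulr1 mul1r.
rewrite covE !mean_block_vec (eq_bigr _ (fun c _ => prod_block c)) -mulr_sumr.
by rewrite (sum_block_indicator block_size) m_eq natrM; field.
Qed.

Lemma pcc_block_vec i j :
  pcc (block_vec R g i) (block_vec R g j) =
  if i == j then 1 else - (k%:R - 1)^-1.
Proof.
have var_pos : 0 < s%:R * (1 - k%:R^-1) :> R.
  rewrite mulr_gt0 ?ltr0n // subr_gt0 invf_lt1 ?ltr0n 1?ltnW //.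
  by rewrite ltr1n.
rewrite pcc_nonconstant ?block_vec_nonconstant // !cov_block_vec !eqxx.
rewrite -expr2 sqr_sqrtr ?ltW //.
case: eqP => _; first by rewrite divff // gt_eqF.
by rewrite /=; field; rewrite k_neq0 k1_neq0 s_neq0.
Qed.

Lemma pos_pcc_block_vec i j :
  Num.max 0 (pcc (block_vec R g i) (block_vec R g j)) = (i == j)%:R.
Proof.
rewrite pcc_block_vec; case: (i == j); first by rewrite max_r ?ler01.
by rewrite max_l // oppr_le0 invr_ge0 ltW // subr_gt0 ltr1n.
Qed.

End BlockVectors.

Theorem proposition5 (R : rcfType) (k m n : nat) (E : election m n) :
  (2 <= k)%N -> (0 < m)%N -> (0 < n)%N -> (k %| m)%N -> (k %| n)%N ->
  k_party k E ->
  pcc_agr R E = 0 /\ pccp_agr R E = 1 / k%:R.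
Proof.
move=> k_gt1 m_gt0 n_gt0 _ _ [gc [gv [eq_gc eq_gv approve]]].
pose k0 : 'I_k := Ordinal (ltnW k_gt1).
set s := #|[set c | gc c == k0]|; set t := #|[set v | gv v == k0]|.
have gc_size i : #|[set c | gc c == i]| = s by exact: eq_gc.
have gv_size i : #|[set v | gv v == i]| = t by exact: eq_gv.
have s_gt0 : (0 < s)%N
  by apply: (equipartition_block_gt0 gc_size); rewrite card_ord.
have t_gt0 : (0 < t)%N
  by apply: (equipartition_block_gt0 gv_size); rewrite card_ord.
have n_eq : n = (k * t)%N by rewrite -(card_equipartition gv_size) card_ord.
have vote_block w : vote_vec R E w =1 block_vec R gc (gv w).
  by move=> c; rewrite /vote_vec approve.
have pcc_votes u v : pcc (vote_vec R E u) (vote_vec R E v) =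
    if gv v == gv u then 1 else - (k%:R - 1)^-1.
  rewrite (eq_pcc (vote_block u) (vote_block v)).
  by rewrite (pcc_block_vec R k_gt1 s_gt0 gc_size) eq_sym.
have pos_pcc_votes u v :
    Num.max 0 (pcc (vote_vec R E u) (vote_vec R E v)) = (gv v == gv u)%:R.
  rewrite (eq_pcc (vote_block u) (vote_block v)).
  by rewrite (pos_pcc_block_vec R k_gt1 s_gt0 gc_size) eq_sym.
split.
- rewrite /pcc_agr big1 ?mul0r // => u _.
  rewrite (eq_bigr _ (fun v _ => pcc_votes u v)) (sum_block_if gv_size).
  by rewrite mulrN divff ?subrr ?mulr0 // subr_eq0 pnatr_eq1 neq_ltn k_gt1 orbT.
- rewrite /pccp_agr (eq_bigr (fun=> t%:R)) => [|u _].
    rewrite sumr_const card_ord n_eq -[_ *+ _]mulr_natl natrX natrM.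
    by field; rewrite !pnatr_eq0 -!lt0n t_gt0 ltnW.
  rewrite (eq_bigr _ (fun v _ => pos_pcc_votes u v)).
  exact: sum_block_indicator gv_size _ _.
Qed.
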